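(* Let $X$ be a topological space and $f\colon X\to X$ a homeomorphism such that the $\mathbb Z$-action $n\cdot x=f^n(x)$ is cocompactly expansive. Then for every integer $n\neq 0$, the homeomorphism $f^n$ (i.e. the $\mathbb Z$-action $m\cdot x=f^{nm}(x)$) is cocompactly expansive.
   Context: For a family $\mathcal U$ of subsets of $X$ and $A\subseteq X$, write $A\prec\mathcal U$ if $A\subseteq U$ for some $U\in\mathcal U$. An action of a group $G$ on $X$ is cocompactly expansive if there exist a finite open cover $\mathcal U$ of $X$ and a compact set $K\subseteq X$ such that (1) $G\cdot K=X$, and (2) whenever $x,y\in X$ satisfy $\{g\cdot x,g\cdot y\}\prec\mathcal U\cup\{X\setminus K\}$ for every $g\in G$, then $x=y$. *)

From HB Require Import structures.
From mathcomp Require Import all_boot all_order all_algebra.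
From mathcomp Require Import all_classical all_reals topology.
Set Implicit Arguments. Unset Strict Implicit. Unset Printing Implicit Defensive.
Import Order.TTheory GRing.Theory Num.Theory.
Local Open Scope classical_set_scope.
Local Open Scope ring_scope.

Definition subordinate {X : Type} (A : set X) (U : set (set X)) : Prop :=
  exists2 V, U V & A `<=` V.

Definition cocompactly_expansive {G : Type} {X : topologicalType}
  (act : G -> X -> X) : Prop :=
  exists (U : set (set X)) (K : set X),
    [/\ finite_set U, (forall V, U V -> open V), \bigcup_(V in U) V = setT,
        compact K /\
        (forall x : X, exists g : G, exists2 k, K k & act g k = x) &
        (forall x y : X,
           (forall g : G, subordinate [set act g x; act g y] (U `|` [set ~` K])) ->
           x = y)].

Definition zpow {X : Type} (f finv : X -> X) (n : int) : X -> X :=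
  match n with
  | Posz k => iter k f
  | Negz k => iter k.+1 finv
  end.

From HB Require Import structures.
From mathcomp Require Import all_boot all_order all_algebra.
From mathcomp Require Import all_classical all_reals topology.
From mathcomp Require Import zify.

Set Implicit Arguments.
Unset Strict Implicit.
Unset Printing Implicit Defensive.
Import Order.TTheory GRing.Theory Num.Theory.
Local Open Scope classical_set_scope.
Local Open Scope ring_scope.

(* For |n| = k + 1, replace U by its dynamical refinement
   U ∨ f^-1 U ∨ ... ∨ f^-k U and K by K ∪ f^-1 K ∪ ... ∪ f^-k K.  Every
   integer is i + n q with 0 <= i <= k, so the f^n-translates of the enlarged
   compact set still cover X, and a pair of points subordinate to the refined
   cover along its f^n-orbit is subordinate to U ∪ {X \ K} along its whole
   f-orbit. *)

Section IntegerPowers.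
Variables (X : Type) (f finv : X -> X).
Hypotheses (fK : cancel f finv) (finvK : cancel finv f).

Lemma zpow1D (z : int) x : zpow f finv (1 + z) x = f (zpow f finv z x).
Proof.
case: z => [k|[|k]]; first by have -> : 1 + Posz k = Posz k.+1 by lia.
  by rewrite /= finvK.
have -> : 1 + Negz k.+1 = Negz k by rewrite !NegzE; lia.
by rewrite /= finvK.
Qed.

Lemma zpowN1D (z : int) x : zpow f finv (-1 + z) x = finv (zpow f finv z x).
Proof.
case: z => [[|k]|k] //.
have -> : -1 + (k.+1)%:Z = k%:Z by lia.
by rewrite /= fK.
Qed.

Lemma zpowD (a b : int) x :
  zpow f finv (a + b) x = zpow f finv a (zpow f finv b x).
Proof.
elim/int_rec: a => [|k IH|k IH]; first by rewrite add0r.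
  have -> : k.+1%:Z + b = 1 + (k%:Z + b) by lia.
  by rewrite zpow1D IH -zpow1D -[1 + _]/(k.+1%:Z).
have -> : - k.+1%:Z + b = -1 + (- k%:Z + b) by lia.
have -> : - k.+1%:Z = -1 - k%:Z by lia.
by rewrite zpowN1D IH -zpowN1D.
Qed.

Lemma zpowNnat (k : nat) x : zpow f finv (- k%:Z) x = iter k finv x.
Proof. by case: k. Qed.

End IntegerPowers.

Lemma divz_natmod (n g : int) : n != 0 ->
  exists q (i : nat), (i < `|n|)%N /\ g = i%:Z + n * q.
Proof.
move=> n0; exists (g %/ n)%Z, `|(g %% n)%Z|%N.
have r0 : 0 <= (g %% n)%Z by apply: modz_ge0.
have rn : (g %% n)%Z < `|n|%:Z by rewrite abszE; apply: ltz_mod.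
split; first by lia.
by rewrite gez0_abs // addrC mulrC -divz_eq.
Qed.

Section DynamicalRefinement.
Variables (X : topologicalType) (f finv : X -> X) (U : set (set X)) (K : set X).

Fixpoint refined_cover (k : nat) : set (set X) :=
  if k is k.+1 then [set V `&` f @^-1` W | V in U & W in refined_cover k]
  else U.

Fixpoint backward_spread (k : nat) : set X :=
  if k is k.+1 then K `|` finv @` backward_spread k else K.

Lemma refined_cover_finite k : finite_set U -> finite_set (refined_cover k).
Proof. by move=> fU; elim: k => [|k IH] //=; apply: finite_image2. Qed.

Lemma refined_cover_open k : continuous f -> (forall V, U V -> open V) ->
  forall W, refined_cover k W -> open W.
Proof.
move=> f_cont oU; elim: k => [|k IH] //= W [V UV [W' UW' <-]].
by apply: openI; [exact: oU | apply/(continuousP f).1 => //; apply: IH].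
Qed.

Lemma refined_cover_cover k : \bigcup_(V in U) V = setT ->
  \bigcup_(W in refined_cover k) W = setT.
Proof.
move=> cU; elim: k => [|k IH] //=; apply/seteqP; split=> // x _.
have [V UV Vx] : (\bigcup_(V in U) V) x by rewrite cU.
have [W UW Wx] : (\bigcup_(W in refined_cover k) W) (f x) by rewrite IH.
by exists (V `&` f @^-1` W) => //; exists V => //; exists W.
Qed.

Lemma refined_cover_iter k W i : refined_cover k W -> (i <= k)%N ->
  exists2 V, U V & iter i f @` W `<=` V.
Proof.
elim: k W i => [|k IH] W [|i] //=.
- by move=> UW _; exists W => // _ [a ? <-].
- by move=> [V UV [W' _ <-]] _; exists V => // _ [a [? _] <-].
move=> [V _ [W' UW' <-]] ik; have [V' UV' sV'] := IH W' i UW' ik.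
by exists V' => // _ [a [_ W'fa] <-]; rewrite iterSr; apply: sV'; exists (f a).
Qed.

Lemma backward_spread_compact k : continuous finv -> compact K ->
  compact (backward_spread k).
Proof.
move=> finv_cont cK; elim: k => [|k IH] //=.
apply: compactU => //; apply: continuous_compact => //.
exact: continuous_subspaceT.
Qed.

Lemma backward_spread_iter_finv k j z : K z -> (j <= k)%N ->
  backward_spread k (iter j finv z).
Proof.
move=> Kz; elim: k j => [|k IH] [|j] jk //=; first by left.
by right; exists (iter j finv z) => //; apply: IH.
Qed.

Lemma notin_backward_spread_iter k i a : cancel f finv ->
  ~ backward_spread k a -> (i <= k)%N -> ~ K (iter i f a).
Proof.
move=> fK; elim: k i a => [|k IH] [|i] a //= Ha ik.
  by move=> Ka; apply: Ha; left.
rewrite -iterS iterSr; apply: IH => // Kfa; apply: Ha; right.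
by exists (f a) => //; rewrite fK.
Qed.

Lemma subordinate_refined_iter k i A : cancel f finv -> (i <= k)%N ->
  subordinate A (refined_cover k `|` [set ~` backward_spread k]) ->
  subordinate (iter i f @` A) (U `|` [set ~` K]).
Proof.
move=> fK ik [W [UW|->] AW].
  have [V UV sV] := refined_cover_iter UW ik.
  by exists V; [left | apply: subset_trans sV; apply: image_subset].
exists (~` K); first by right.
by move=> _ [a /AW Ka <-]; exact: (notin_backward_spread_iter fK Ka ik).
Qed.

End DynamicalRefinement.

Theorem mainTheorem3 (X : topologicalType) (f finv : X -> X)
  (f_cont : continuous f) (finv_cont : continuous finv)
  (fK : cancel f finv) (finvK : cancel finv f) :
  cocompactly_expansive (fun m : int => zpow f finv m) ->
  forall n : int, n != 0 ->
  cocompactly_expansive (fun m : int => zpow f finv (n * m)).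
Proof.
move=> [U [K [fU oU cU [cK HK] HE]]] n n0.
have ltn_k (i : nat) : (i < `|n|)%N -> (i <= `|n|.-1)%N by case: `|n|%N.
exists (refined_cover f U `|n|.-1), (backward_spread finv K `|n|.-1); split.
- exact: refined_cover_finite.
- exact: refined_cover_open.
- exact: refined_cover_cover.
- split; first exact: backward_spread_compact.
  move=> x; have [g [z Kz <-]] := HK x.
  have [q [j [jn gE]]] := divz_natmod (- g) n0.
  exists (- q), (iter j finv z); first exact/backward_spread_iter_finv/ltn_k.
  have -> : g = n * - q + - j%:Z by lia.
  by rewrite zpowD // zpowNnat.
- move=> x y Hxy; apply: HE => g.
  have [q [i [ilt ->]]] := divz_natmod g n0.
  rewrite !zpowD //.
  have := subordinate_refined_iter fK (ltn_k _ ilt) (Hxy q).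
  by rewrite image_setU !image_set1.
Qed.
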